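(* Let $\mathcal{G}=(G,o,R_1,\ldots,R_n)$ be a functional Menger system of rank $n$ and let $H$ be a nonempty subset of $G$. Then $H$ is a stabilizer of $\mathcal{G}$ if and only if $H$ is a quasi-stable, $l$-unitary normal $v$-complex such that $R_iH\subseteq H$ for every $i\in\{1,\ldots,n\}$ and for every $m\in\mathbb N=\{0,1,2,\ldots\}$ the condition $(A_m)$ holds, where $(A_m)$ states: for all $x,y,u\in G$, $\bar w\in G^n$, $i\in\{1,\ldots,n\}$, if $x=y[R_1x\ldots R_nx]$, $x\in C_H^m(H)$ and $u[\bar w\,|_iy]\in H$, then $u[\bar w\,|_ix]\in H$.
   Context: A functional Menger system of rank $n$ is a nonempty set $G$ with an $(n+1)$-ary operation $o\colon(x_0,x_1,\ldots,x_n)\mapsto x_0[x_1\ldots x_n]$ and unary operations $R_1,\ldots,R_n$ satisfying, for all $i,k\in\{1,\ldots,n\}$ and all elements: (A1) $x[y_1\ldots y_n][z_1\ldots z_n]=x[y_1[z_1\ldots z_n]\ldots y_n[z_1\ldots z_n]]$; (A2) $x[R_1x\ldots R_nx]=x$; (A3) $x[\bar u\,|_iz][R_1y\ldots R_ny]=x[\bar u\,|_iz[R_1y\ldots R_ny]]$; (A4) $R_ix[R_1y\ldots R_ny]=(R_ix)[R_1y\ldots R_ny]$; (A5) $x[R_1y\ldots R_ny][R_1z\ldots R_nz]=x[R_1z\ldots R_nz][R_1y\ldots R_ny]$; (A6) $R_ix[y_1\ldots y_n]=R_i(R_kx)[y_1\ldots y_n]$; (A7) $(R_ix)[y_1\ldots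 y_n]=y_i[R_1(x[y_1\ldots y_n])\ldots R_n(x[y_1\ldots y_n])]$. Here $x[\bar u\,|_iz]$ denotes $x[u_1\ldots u_{i-1}\,z\,u_{i+1}\ldots u_n]$, and $R_ix[\ldots]$ means $R_i(x[\ldots])$. For a set $A$, $\mathcal F(A^n,A)$ is the set of partial maps $A^n\to A$. The Menger composition $f[g_1\ldots g_n]$ is the partial function $\bar a\mapsto f(g_1(\bar a),\ldots,g_n(\bar a))$ (defined exactly when the right side is defined), and $\mathcal R_if$ is the partial function with the same domain as $f$ given by $(a_1,\ldots,a_n)\mapsto a_i$. A representation of $\mathcal G$ by $n$-place functions on a set $A$ is a map $P\colon G\to\mathcal F(A^n,A)$ with $P(x[y_1\ldots y_n])=P(x)[P(y_1)\ldots P(y_n)]$ and $P(R_ix)=\mathcal R_iP(x)$. A nonempty $H\subseteq G$ is a stabilizer of $\mathcal G$ if there exist such a representation $P$ on some set $A$ and a point $a\in A$ with $H=\{g\in G: P(g)(a,\ldots,a)=a\}$. $T_n(G)$ is the smallest set of maps $G\to G$ containing the identity and closed under $t\mapsto (x\mapsto a[\bar b\,|_it(x)])$ and $t\mapsto(x\mapsto R_it(x))$ for all $a\in G$, $\bar b\in G^n$, $i$. A nonempty $H\subseteq G$ is quasi-stable if $x\in H\Rightarrow x[x\ldots x]\in H$; $l$-unitary if $x[y\ldots y]\in H$ and $y\in H$ imply $x\in H$; a normal $v$-complex if $x,y\in H$ and $t(x)\in H$ imply $t(y)\in H$ for all $x,y\in G$, $t\in T_n(G)$. Write $x\le y$ iff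 $x=y[R_1x\ldots R_nx]$. For $X\subseteq G$, let $C_H(X)$ be the set of all $c\in G$ for which there exist $a,b\in G$ and $t\in T_n(G)$ with ($a\le b$ or $a,b\in H$), $t(a)[R_1c\ldots R_nc]=t(a)$, $a\in X$ and $t(b)\in X$. Put $C_H^0(X)=X$ and $C_H^{m+1}(X)=C_H(C_H^m(X))$. *)

From mathcomp Require Import all_boot.
Set Implicit Arguments. Unset Strict Implicit. Unset Printing Implicit Defensive.

Section Menger.
Variable n : nat.

(** Vectors of length n are finite functions on 'I_n (indices 0..n-1
    correspond to the paper's 1..n). *)
Definition upd (T : Type) (u : {ffun 'I_n -> T}) (i : 'I_n) (z : T) : {ffun 'I_n -> T} :=
  [ffun j => if j == i then z else u j].

Variable G : Type.
(** o x y  is  x[y_1 ... y_n];  R i x  is  R_i x. *)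
Variable o : G -> {ffun 'I_n -> G} -> G.
Variable R : 'I_n -> G -> G.

Definition Rs (y : G) : {ffun 'I_n -> G} := [ffun k => R k y].

Record menger_system : Prop := {
  A1 : forall x y z, o (o x y) z = o x [ffun j => o (y j) z];
  A2 : forall x, o x (Rs x) = x;
  A3 : forall x u i z y, o (o x (upd u i z)) (Rs y) = o x (upd u i (o z (Rs y)));
  A4 : forall i x y, R i (o x (Rs y)) = o (R i x) (Rs y);
  A5 : forall x y z, o (o x (Rs y)) (Rs z) = o (o x (Rs z)) (Rs y);
  A6 : forall i k x y, R i (o x y) = R i (o (R k x) y);
  A7 : forall i x y, o (R i x) y = o (y i) (Rs (o x y))
}.

Definition pfun (A : Type) := {ffun 'I_n -> A} -> option A.

Definition is_mcomp (A : Type) (f : pfun A) (g : 'I_n -> pfun A) (h : pfun A) : Prop :=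
  forall a c, h a = Some c <->
    exists b : {ffun 'I_n -> A}, (forall j, g j a = Some (b j)) /\ f b = Some c.

Definition pproj (A : Type) (i : 'I_n) (f : pfun A) : pfun A :=
  fun a => if f a is Some _ then Some (a i) else None.

Definition is_rep (A : Type) (P : G -> pfun A) : Prop :=
  (forall x (y : {ffun 'I_n -> G}), is_mcomp (P x) (fun j => P (y j)) (P (o x y))) /\
  (forall i x a, P (R i x) a = pproj i (P x) a).

Definition stabilizer (H : G -> Prop) : Prop :=
  exists (A : Type) (P : G -> pfun A) (a : A),
    is_rep P /\ forall g, H g <-> P g [ffun=> a] = Some a.

Inductive Tn : (G -> G) -> Prop :=
  | Tn_id : Tn (fun x => x)
  | Tn_op (a : G) (b : {ffun 'I_n -> G}) (i : 'I_n) (t : G -> G) :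
      Tn t -> Tn (fun x => o a (upd b i (t x)))
  | Tn_R (i : 'I_n) (t : G -> G) : Tn t -> Tn (fun x => R i (t x)).

Definition quasi_stable (H : G -> Prop) : Prop :=
  forall x, H x -> H (o x [ffun=> x]).

Definition l_unitary (H : G -> Prop) : Prop :=
  forall x y, H (o x [ffun=> y]) -> H y -> H x.

Definition normal_vcomplex (H : G -> Prop) : Prop :=
  forall x y t, Tn t -> H x -> H y -> H (t x) -> H (t y).

Definition mle (x y : G) : Prop := x = o y (Rs x).

Definition C_H (H X : G -> Prop) : G -> Prop :=
  fun c => exists a b t, Tn t /\ (mle a b \/ (H a /\ H b)) /\
     o (t a) (Rs c) = t a /\ X a /\ X (t b).

Definition C_Hm (H : G -> Prop) (m : nat) (X : G -> Prop) : G -> Prop :=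
  iter m (C_H H) X.

Definition cond_A (H : G -> Prop) (m : nat) : Prop :=
  forall x y u (w : {ffun 'I_n -> G}) (i : 'I_n),
    x = o y (Rs x) -> C_Hm H m H x -> H (o u (upd w i y)) -> H (o u (upd w i x)).

End Menger.

From mathcomp Require Import all_boot.
From Stdlib Require Import ClassicalEpsilon FunctionalExtensionality PropExtensionality.
Set Implicit Arguments. Unset Strict Implicit. Unset Printing Implicit Defensive.

(* Necessity: for a representation P and the point a, every element of
   C_H^m(H) is defined at (a,...,a), and if x <= y with x defined there then
   P x and P y agree there; this yields (A_m), the other conditions being
   immediate.
   Sufficiency: let C_Hinf be the union of all C_H^m(H) and call x, z in
   C_Hinf indistinguishable when no context t in T_n separates them with
   respect to membership in C_Hinf or in H.  Then g acts on tuples of classes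
   by [v_1 ... v_n] |-> [g[v]], defined when g[v] lies in C_Hinf; this is a
   representation and the stabilizer of the class of any h in H is H.  The
   conditions (A_m) make H downward closed inside C_Hinf for <=, which is
   needed for R_i to act as the projection on classes. *)

Lemma option_ext (A : Type) (p q : option A) :
  (forall d, p = Some d <-> q = Some d) -> p = q.
Proof.
case: p => [d|] pq; first by symmetry; apply/pq.
by case: q pq => [d|] // pq; have := proj2 (pq d) erefl.
Qed.

Section MengerSystem.
Variables (n : nat) (G : Type) (o : G -> {ffun 'I_n -> G} -> G) (R : 'I_n -> G -> G).
Hypothesis HG : menger_system o R.

Local Notation Rs := (Rs R).
Local Notation mle := (mle o R).
Local Notation Tn := (Tn o R).

Lemma Rs_restrict x y : Rs (o x (Rs y)) = [ffun k => o (Rs x k) (Rs y)].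
Proof. by apply/ffunP=> k; rewrite !ffunE (A4 HG). Qed.

Lemma restrict_idem x y : o (o x (Rs y)) (Rs y) = o x (Rs y).
Proof.
rewrite (A1 HG); congr (o x); apply/ffunP=> j.
by rewrite !ffunE -(A4 HG) (A2 HG).
Qed.

Lemma comp_restrict_arg x z j : o (o x z) (Rs (z j)) = o x z.
Proof.
set e := o x z.
have Rs_e : Rs e = [ffun i => o (Rs (z j) i) (Rs e)].
  by apply/ffunP=> i; rewrite !ffunE /e (A6 HG i j) (A7 HG) -/e (A4 HG).
by rewrite -{2}(A2 HG e) Rs_e -(A1 HG) (A5 HG) (A2 HG).
Qed.

Lemma restrict_by_restricted x y : o x (Rs (o y (Rs x))) = o x (Rs y).
Proof. by rewrite Rs_restrict -(A1 HG) (A5 HG) (A2 HG). Qed.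

Lemma mle_restrict x y : mle (o x (Rs y)) x.
Proof. by rewrite /mle Rs_restrict -(A1 HG) (A2 HG). Qed.

Lemma mle_restrict_greater x y : mle x y -> o x (Rs y) = x.
Proof.
move=> xy; transitivity (o (o y (Rs x)) (Rs y)); first by rewrite -xy.
by rewrite (A5 HG) (A2 HG) -xy.
Qed.

Lemma mle_n0 x y : n = 0 -> mle x y -> x = y.
Proof.
move=> n0 ->; have -> : Rs x = Rs y.
  by apply/ffunP=> -[j lt_jn]; exfalso; move: lt_jn; rewrite n0.
exact: (A2 HG).
Qed.

Lemma Tn_restrict t x y w : Tn t -> x = o y (Rs w) -> t x = o (t y) (Rs w).
Proof.
move=> Tt xyw; elim: Tt => [|a b i t' _ IH|i t' _ IH] //=.
- by rewrite IH (A3 HG).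
- by rewrite IH (A4 HG).
Qed.

Lemma Tn_mle t x y : Tn t -> mle x y -> mle (t x) (t y).
Proof. by move=> Tt xy; rewrite (Tn_restrict Tt xy); apply: mle_restrict. Qed.

Lemma Tn_comp s t : Tn s -> Tn t -> Tn (fun x => s (t x)).
Proof.
move=> Ts Tt; elim: Ts => [|a b i t' _ IH|i t' _ IH] //=.
- exact: Tn_op.
- exact: Tn_R.
Qed.

Lemma Tn_upd g w j : Tn (fun z => o g (upd w j z)).
Proof. exact/Tn_op/Tn_id. Qed.

Lemma upd_ind (Q : {ffun 'I_n -> G} -> Prop) (v v' : {ffun 'I_n -> G}) :
  (forall w j, Q (upd w j (v j)) -> Q (upd w j (v' j))) -> Q v -> Q v'.
Proof.
move=> step Qv.
pose mix m := [ffun j : 'I_n => if (j < m)%N then v' j else v j].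
have mix_n : mix n = v' by apply/ffunP=> j; rewrite ffunE ltn_ord.
suff: forall m, Q (mix m) by move/(_ n); rewrite mix_n.
elim=> [|m IH]; first by have -> : mix 0 = v by apply/ffunP=> j; rewrite ffunE.
case: (ltnP m n) => [lt_mn|le_nm].
- pose i := Ordinal lt_mn.
  have mix_m : mix m = upd (mix m) i (v i).
    by apply/ffunP=> j; rewrite !ffunE; case: eqP => // ->; rewrite ltnn.
  have mix_Sm : mix m.+1 = upd (mix m) i (v' i).
    apply/ffunP=> j; rewrite !ffunE ltnS leq_eqVlt.
    have [->|ne] := eqVneq j i; first by rewrite eqxx.
    have [jm|//] := eqVneq (j : nat) m.
    by case/eqP: ne; apply: val_inj.
  by rewrite mix_Sm; apply: step; rewrite -mix_m.
- have -> : mix m.+1 = mix m.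
    apply/ffunP=> j; rewrite !ffunE.
    have lt_jm : (j < m)%N by apply: leq_trans (ltn_ord j) le_nm.
    by rewrite lt_jm ltnW.
  exact: IH.
Qed.

Lemma vcomplex_upd_all (H : G -> Prop) g (v v' : {ffun 'I_n -> G}) :
  normal_vcomplex o R H -> (forall j, H (v j) /\ H (v' j)) -> H (o g v) -> H (o g v').
Proof.
move=> vH vv'; apply: (upd_ind (Q := fun w => H (o g w))) => w j.
by have [] := vv' j; apply: (vH _ _ _ (Tn_upd g w j)).
Qed.

Section Necessity.
Variables (A : Type) (P : G -> pfun n A).
Hypothesis HP : is_rep o R P.

Lemma rep_upd_congr c u w i x y :
  P x c = P y c -> P (o u (upd w i x)) c = P (o u (upd w i y)) c.
Proof.
move=> Pxy; apply: option_ext => d.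
rewrite (HP.1 u (upd w i x) c d) (HP.1 u (upd w i y) c d).
split=> -[b [Pb Pu]]; exists b; split=> // j.
  all: by move: (Pb j); rewrite !ffunE; case: eqP; rewrite ?Pxy.
Qed.

Lemma rep_Tn_congr c t x y : Tn t -> P x c = P y c -> P (t x) c = P (t y) c.
Proof.
move=> Tt Pxy; elim: Tt => [|a b i t' _ IH|i t' _ IH] //=.
- exact: rep_upd_congr.
- by rewrite !HP.2 /pproj IH.
Qed.

Lemma rep_restrict c x y d : P x c = Some d -> P (o y (Rs x)) c = P y c.
Proof.
move=> Px; have PRx j : P (R j x) c = Some (c j) by rewrite HP.2 /pproj Px.
apply: option_ext => e; rewrite (HP.1 y (Rs x) c e); split.
- move=> [b [Pb Py]]; suff -> : c = b by [].
  by apply/ffunP=> j; move: (Pb j); rewrite ffunE PRx => -[].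
- by move=> Py; exists c; split=> // j; rewrite ffunE PRx.
Qed.

Lemma rep_restrict_defined c x y e : (0 < n)%N ->
  P (o x (Rs y)) c = Some e -> exists d, P y c = Some d.
Proof.
move=> n_gt0 /(HP.1 x (Rs y) c e) [b [Pb _]].
by move: (Pb (Ordinal n_gt0)); rewrite ffunE HP.2 /pproj; case: (P y c) => [d|] //; exists d.
Qed.

Variables (a : A) (H : G -> Prop).
Hypothesis H_stab : forall g, H g <-> P g [ffun=> a] = Some a.
Local Notation abar := [ffun=> a].

Lemma stab_quasi_stable : quasi_stable o H.
Proof.
move=> x /H_stab Hx; apply/H_stab/(HP.1 x [ffun=> x] abar a).
by exists abar; split=> // j; rewrite !ffunE.
Qed.

Lemma stab_l_unitary : l_unitary o H.
Proof.
move=> x y /H_stab /(HP.1 x [ffun=> y] abar a) [b [Pb Px]] /H_stab Hy; apply/H_stab.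
suff -> : abar = b by [].
by apply/ffunP=> j; move: (Pb j); rewrite !ffunE Hy => -[].
Qed.

Lemma stab_normal_vcomplex : normal_vcomplex o R H.
Proof.
move=> x y t Tt /H_stab Hx /H_stab Hy /H_stab Htx; apply/H_stab; rewrite -Htx.
by apply: rep_Tn_congr; rewrite ?Hx ?Hy.
Qed.

Lemma stab_R_closed i x : H x -> H (R i x).
Proof. by move=> /H_stab Hx; apply/H_stab; rewrite HP.2 /pproj Hx ffunE. Qed.

Lemma C_Hm_defined m c : (0 < n)%N -> C_Hm o R H m H c -> exists d, P c abar = Some d.
Proof.
move=> n_gt0; elim: m c => [|m IH] c; first by move=> /H_stab Hc; exists a.
rewrite /C_Hm iterS -/(C_Hm o R H m H) => -[x [y [t [Tt [xy [txc [Cx Cty]]]]]]].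
have [d1 Px] := IH _ Cx; have [d2 Pty] := IH _ Cty.
have Pxy : P x abar = P y abar.
  case: xy => [xy|[Hx Hy]]; first by rewrite {1}xy (rep_restrict _ Px).
  by rewrite (H_stab x).1 ?(H_stab y).1.
apply: (rep_restrict_defined (x := t x) n_gt0).
by rewrite txc (rep_Tn_congr Tt Pxy) Pty.
Qed.

Lemma stab_cond_A m : cond_A o R H m.
Proof.
move=> x y u w i xy Cx Hy.
have [n0|n_gt0] := posnP n; first by rewrite (mle_n0 n0 xy).
have [d Px] := C_Hm_defined n_gt0 Cx.
have Pxy : P x abar = P y abar by rewrite {1}xy (rep_restrict _ Px).
by apply/H_stab; rewrite (rep_upd_congr u w i Pxy); apply/H_stab.
Qed.

End Necessity.

Section Sufficiency.
Variable H : G -> Prop.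
Hypotheses (H_qs : quasi_stable o H) (H_lu : l_unitary o H)
  (H_nv : normal_vcomplex o R H) (H_R : forall i x, H x -> H (R i x))
  (H_A : forall m, cond_A o R H m).

Local Notation C_Hm := (C_Hm o R H).

Definition C_Hinf x := exists m, C_Hm m H x.

Lemma C_H_incl X x : X x -> C_H o R H X x.
Proof.
move=> Xx; exists x, x, id; do ![split] => //; first exact: Tn_id.
- by left; rewrite /mle (A2 HG).
- exact: (A2 HG).
Qed.

Lemma C_Hm_le m k x : (m <= k)%N -> C_Hm m H x -> C_Hm k H x.
Proof.
move/subnK <-; elim: (k - m) => [|l IH] // Cx.
by rewrite addSn /C_Hm iterS; apply/C_H_incl/IH.
Qed.

Lemma C_Hinf_H x : H x -> C_Hinf x.
Proof. by exists 0. Qed.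

Lemma C_Hinf_restrictor x c : C_Hinf x -> o x (Rs c) = x -> C_Hinf c.
Proof.
move=> [m Cx] xc; exists m.+1; rewrite /C_Hm iterS.
exists x, x, id; do ![split] => //; first exact: Tn_id.
by left; rewrite /mle (A2 HG).
Qed.

Lemma C_Hinf_Tn t x y : Tn t -> mle x y \/ (H x /\ H y) ->
  C_Hinf x -> C_Hinf (t y) -> C_Hinf (t x).
Proof.
move=> Tt xy [m1 Cx] [m2 Cty]; exists (maxn m1 m2).+1; rewrite /C_Hm iterS.
exists x, y, t; do ![split] => //; first exact: (A2 HG).
- by apply: C_Hm_le Cx; rewrite leq_maxl.
- by apply: C_Hm_le Cty; rewrite leq_maxr.
Qed.

Lemma H_mle_up x y : mle x y -> H x -> H y.
Proof.
move=> xy Hx; apply: (H_lu (y := x)) => //.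
apply: (vcomplex_upd_all (v := Rs x)) => [//|j|]; last by rewrite -xy.
by rewrite !ffunE; split; [apply: H_R|].
Qed.

(* (A_m) turns R_k y [y ... y], which lies in H, into R_k y [x ... x], and by
   A7 the latter is a restriction of x. *)
Lemma H_mle_down x y : mle x y -> C_Hinf x -> H y -> H x.
Proof.
move=> xy [m Cx] Hy; have [n0|n_gt0] := posnP n; first by rewrite (mle_n0 n0 xy).
pose k := Ordinal n_gt0.
have HRky : H (o (R k y) [ffun=> y]).
  apply: (vcomplex_upd_all (v := [ffun=> R k y])) (H_qs (H_R k Hy)) => // j.
  by rewrite !ffunE; split; [apply: H_R|].
have : H (o (R k y) [ffun=> x]).
  apply: (upd_ind (Q := fun w => H (o (R k y) w))) HRky => w j.
  by rewrite !ffunE; apply: (H_A xy Cx).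
by rewrite (A7 HG) ffunE; apply: H_mle_up; apply: mle_restrict.
Qed.

Definition indist x z := C_Hinf x /\ C_Hinf z /\ forall t, Tn t ->
  (C_Hinf (t x) <-> C_Hinf (t z)) /\ (H (t x) <-> H (t z)).

Lemma indist_refl x : C_Hinf x -> indist x x.
Proof. by move=> Cx; split; last split. Qed.

Lemma indist_sym x z : indist x z -> indist z x.
Proof.
move=> [Cx [Cz xz]]; split=> //; split=> // t Tt.
by have [? ?] := xz t Tt; split; symmetry.
Qed.

Lemma indist_trans x y z : indist x y -> indist y z -> indist x z.
Proof.
move=> [Cx [_ xy]] [_ [Cz yz]]; split=> //; split=> // t Tt.
by have [-> ->] := xy t Tt; apply: yz.
Qed.

Lemma indist_H x z : H x -> H z -> indist x z.
Proof.
move=> Hx Hz; split; first exact: C_Hinf_H.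
split=> [|t Tt]; first exact: C_Hinf_H.
split; split; try exact: H_nv.
- exact: (C_Hinf_Tn Tt (or_intror (conj Hz Hx)) (C_Hinf_H Hz)).
- exact: (C_Hinf_Tn Tt (or_intror (conj Hx Hz)) (C_Hinf_H Hx)).
Qed.

Lemma indist_mle x y : mle x y -> C_Hinf x -> C_Hinf y -> indist x y.
Proof.
move=> xy Cx Cy; split=> //; split=> // t Tt; have txy := Tn_mle Tt xy.
have Ctx : C_Hinf (t y) -> C_Hinf (t x) by apply: (C_Hinf_Tn Tt (or_introl xy)).
split; split=> //.
- by move=> Ct; apply: (C_Hinf_restrictor Ct); apply: mle_restrict_greater.
- exact: H_mle_up.
- by move=> Hty; apply: H_mle_down (Ctx (C_Hinf_H Hty)) Hty.
Qed.

Lemma indist_comp g (v v' : {ffun 'I_n -> G}) : (forall j, indist (v j) (v' j)) ->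
  C_Hinf (o g v) -> C_Hinf (o g v') /\ indist (o g v) (o g v').
Proof.
move=> vv' Cgv; apply: (upd_ind (Q := fun w => C_Hinf (o g w) /\ indist (o g v) (o g w))).
  move=> w j [Cgw gvw]; have [_ [_ vj]] := vv' j.
  have Cgw' : C_Hinf (o g (upd w j (v' j))) := (vj _ (Tn_upd g w j)).1.1 Cgw.
  split=> //; apply: (indist_trans gvw); split=> //; split=> // s Ts.
  exact: (vj _ (Tn_comp Ts (Tn_upd g w j))).
by split; last apply: indist_refl.
Qed.

Definition indist_class x : G -> Prop := indist x.

Definition represents (c : {ffun 'I_n -> G -> Prop}) (v : {ffun 'I_n -> G}) :=
  forall j, C_Hinf (v j) /\ c j = indist_class (v j).

(* Classes are encoded as predicates; by indist_comp the value does not depend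
   on the chosen representatives v. *)
Definition quotient_rep (g : G) : pfun n (G -> Prop) := fun c =>
  if excluded_middle_informative (exists v, represents c v /\ C_Hinf (o g v))
  then Some (fun z => exists v, represents c v /\ indist (o g v) z) else None.

Lemma indist_class_eq x y : indist x y -> indist_class x = indist_class y.
Proof.
move=> xy; apply: functional_extensionality => z; apply: propositional_extensionality.
by split; apply: indist_trans; [apply: indist_sym|].
Qed.

Lemma indist_class_inj x y : C_Hinf y -> indist_class x = indist_class y -> indist x y.
Proof.
move=> Cy xy; have : indist_class y y by apply: indist_refl.
by rewrite -xy.
Qed.

Lemma represents_indist c v v' j : represents c v -> represents c v' -> indist (v j) (v' j).
Proof.
move=> cv cv'; have [_ cj] := cv j; have [Cv'j cj'] := cv' j.
by apply: (indist_class_inj Cv'j); rewrite -cj -cj'.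
Qed.

Lemma quotient_rep_some c v g : represents c v -> C_Hinf (o g v) ->
  quotient_rep g c = Some (indist_class (o g v)).
Proof.
move=> cv Cgv; rewrite /quotient_rep.
destruct (excluded_middle_informative _) as [ex|NE]; last by case: NE; exists v.
congr Some; apply: functional_extensionality => z; apply: propositional_extensionality.
split=> [[v' [cv' gv'z]]|gvz]; last by exists v.
apply: indist_trans gv'z; apply: (indist_comp _ Cgv).2 => j.
exact: represents_indist.
Qed.

Lemma quotient_rep_none c v g : represents c v -> ~ C_Hinf (o g v) -> quotient_rep g c = None.
Proof.
move=> cv NCgv; rewrite /quotient_rep.
destruct (excluded_middle_informative _) as [[v' [cv' Cgv']]|] => //; case: NCgv.
by apply: (indist_comp _ Cgv').1 => j; apply: represents_indist.
Qed.

Lemma quotient_repP c v g d : represents c v ->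
  quotient_rep g c = Some d <-> C_Hinf (o g v) /\ d = indist_class (o g v).
Proof.
move=> cv; split=> [|[Cgv ->]]; last exact: quotient_rep_some.
case: (classic (C_Hinf (o g v))) => [Cgv|NCgv]; last by rewrite (quotient_rep_none cv NCgv).
by rewrite (quotient_rep_some cv Cgv) => -[].
Qed.

Lemma quotient_rep_represents c g d : quotient_rep g c = Some d -> exists v, represents c v.
Proof.
rewrite /quotient_rep; destruct (excluded_middle_informative _) as [[v [cv Cgv]]|] => //.
by exists v.
Qed.

Lemma quotient_rep_comp x (y : {ffun 'I_n -> G}) :
  is_mcomp (quotient_rep x) (fun j => quotient_rep (y j)) (quotient_rep (o x y)).
Proof.
move=> c d; case: (classic (exists v, represents c v)) => [[v cv]|Nc]; last first.
  split=> [/quotient_rep_represents //|[b [Pyb _]]]; case: Nc.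
  have cj j : exists u, C_Hinf u /\ c j = indist_class u.
    by have [v cv] := quotient_rep_represents (Pyb j); exists (v j); apply: cv.
  have [f cf] := fin_all_exists cj.
  by exists [ffun j => f j] => j; rewrite ffunE.
pose z := [ffun j => o (y j) v].
have Cz j : C_Hinf (o x z) -> C_Hinf (o (y j) v).
  move=> Cxz; apply: (C_Hinf_restrictor Cxz).
  by have := comp_restrict_arg x z j; rewrite ffunE.
rewrite (quotient_repP _ _ cv) (A1 HG) -/z; split.
- move=> [Cxz ->]; exists [ffun j => indist_class (z j)].
  have bz : represents [ffun j => indist_class (z j)] z.
    by move=> j; rewrite !ffunE; split; first exact: Cz Cxz.
  split; last exact/(quotient_repP _ _ bz).
  by move=> j; apply/(quotient_repP _ _ cv); rewrite !ffunE; split; first exact: Cz Cxz.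
- move=> [b [Pyb Pxb]].
  have bz : represents b z.
    by move=> j; have /(quotient_repP _ _ cv) [Cyj ->] := Pyb j; rewrite ffunE.
  exact/(quotient_repP _ _ bz).
Qed.

Lemma quotient_rep_proj i x c : quotient_rep (R i x) c = pproj i (quotient_rep x) c.
Proof.
case: (classic (exists v, represents c v)) => [[v cv]|Nc]; last first.
  have undef g : quotient_rep g c = None.
    by case E: (quotient_rep g c) => [d|] //; case: Nc; apply: quotient_rep_represents E.
  by rewrite /pproj !undef.
set e := o x v.
have Rixv : o (R i x) v = o (v i) (Rs e) by rewrite (A7 HG).
have Ce_iff : C_Hinf e <-> C_Hinf (o (R i x) v).
  rewrite Rixv; split=> C; apply: (C_Hinf_restrictor C); last exact: restrict_idem.
  by rewrite restrict_by_restricted comp_restrict_arg.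
have [Cvi ci] := cv i.
case: (classic (C_Hinf e)) => Ce; last first.
  by rewrite /pproj (quotient_rep_none cv Ce) (quotient_rep_none cv) // => /Ce_iff.
rewrite /pproj (quotient_rep_some cv Ce) (quotient_rep_some cv (Ce_iff.1 Ce)) ci.
congr Some; apply: indist_class_eq; move: (Ce_iff.1 Ce); rewrite Rixv => CRixv.
by apply: indist_mle => //; apply: mle_restrict.
Qed.

Lemma quotient_rep_is_rep : is_rep o R quotient_rep.
Proof. by split; [apply: quotient_rep_comp | apply: quotient_rep_proj]. Qed.

Lemma stabilizer_of_conditions h0 : H h0 -> stabilizer o R H.
Proof.
move=> Hh0; exists (G -> Prop), quotient_rep, (indist_class h0).
split=> [|g]; first exact: quotient_rep_is_rep.
have ch0 : represents [ffun=> indist_class h0] [ffun=> h0].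
  by move=> j; rewrite !ffunE; split; first exact: C_Hinf_H.
rewrite (quotient_repP _ _ ch0); split=> [Hg|[Cg gh0]].
- have Hgh0 : H (o g [ffun=> h0]).
    by apply: (vcomplex_upd_all (v := [ffun=> g])) (H_qs Hg) => // j; rewrite !ffunE.
  split; first exact: C_Hinf_H.
  by apply: indist_class_eq; apply: indist_H.
- have [_ [_ h0g]] := indist_class_inj Cg gh0.
  by apply: (H_lu (y := h0)) => //; apply/((h0g id (Tn_id o R)).2).
Qed.

End Sufficiency.

End MengerSystem.

Theorem theorem3 (n : nat) (G : Type) (o : G -> {ffun 'I_n -> G} -> G)
  (R : 'I_n -> G -> G) (HG : menger_system o R)
  (H : G -> Prop) (Hne : exists h, H h) :
  stabilizer o R H <->
  [/\ quasi_stable o H, l_unitary o H, normal_vcomplex o R H,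
      (forall i x, H x -> H (R i x)) &
      (forall m : nat, cond_A o R H m)].
Proof.
split=> [[A [P [a [HP H_stab]]]]|].
- split.
  + exact: (stab_quasi_stable HP H_stab).
  + exact: (stab_l_unitary HP H_stab).
  + exact: (stab_normal_vcomplex HP H_stab).
  + exact: (stab_R_closed HP H_stab).
  + exact: (stab_cond_A HG HP H_stab).
- have [h0 Hh0] := Hne; case=> H_qs H_lu H_nv H_R H_A.
  exact: (stabilizer_of_conditions HG H_qs H_lu H_nv H_R H_A Hh0).
Qed.
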